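(* Let $k$ be a field and $(A,(I_i^\pm)_{i=1,\ldots,n})$ a good $n$-fold cubical algebra over $k$. Put $A':=I_1^0$ and $J_{i-1}^\pm:=I_i^\pm\cap I_1^0$ for $i=2,\ldots,n$. (1) Then $(A',(J_i^\pm)_{i=1,\ldots,n-1})$ is a good $(n-1)$-fold cubical algebra, and $A'$ and $A$ have the same trace-class operators. (2) The natural homomorphism $I_{tr}/[I_{tr},I_{tr}]\to I_{tr}/[I_{tr},A]$ is an isomorphism.
   Context: Algebras are associative but not necessarily unital; algebra morphisms need not preserve units. A Beilinson $n$-fold cubical algebra over $k$ is an associative $k$-algebra $A$ together with two-sided ideals $I_i^+,I_i^-$ ($i=1,\ldots,n$) such that $I_i^++I_i^-=A$ for each $i$; one sets $I_i^0:=I_i^+\cap I_i^-$ and $I_{tr}:=\bigcap_{i=1}^nI_i^0$ (the trace-class operators). An algebra $B$ is locally left (resp. right) unital if for every finite subset $S\subseteq B$ there is $e_S\in B$ with $e_Sa=a$ (resp. $ae_S=a$) for all $a\in S$; locally bi-unital if both hold. The cubical algebra is good if for every $c=1,\ldots,n$ the intersection $I_1^0\cap\cdots\cap I_c^0$ is locally bi-unital. $[X,Y]$ denotes the $k$-span of commutators $xy-yx$. *)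

(* Non-unital associative algebras over a field k are
   modelled as an lmodType k together with an associative bilinear product.
   Subalgebras / ideals are predicates (A -> Prop) on the ambient carrier. *)
From HB Require Import structures.
From mathcomp Require Import all_boot all_order all_algebra.
Set Implicit Arguments. Unset Strict Implicit. Unset Printing Implicit Defensive.
Import GRing.Theory.
Local Open Scope ring_scope.

Section NUAlg.
Variables (k : fieldType) (A : lmodType k) (mul : A -> A -> A).

Definition is_nualg : Prop :=
  (forall x y z, mul x (mul y z) = mul (mul x y) z) /\
  (forall c x y z, mul (c *: x + y) z = c *: mul x z + mul y z) /\
  (forall c x y z, mul z (c *: x + y) = c *: mul z x + mul z y).

Definition setA : A -> Prop := fun _ => True.

Definition is_subalg (S : A -> Prop) : Prop :=
  S 0 /\ (forall x y, S x -> S y -> S (x + y)) /\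
  (forall (c : k) x, S x -> S (c *: x)) /\
  (forall x y, S x -> S y -> S (mul x y)).

Definition is_ideal (S I : A -> Prop) : Prop :=
  (forall x, I x -> S x) /\ I 0 /\ (forall x y, I x -> I y -> I (x + y)) /\
  (forall (c : k) x, I x -> I (c *: x)) /\
  (forall s x, S s -> I x -> I (mul s x) /\ I (mul x s)).

Definition cubical (S : A -> Prop) (n : nat) (Ip Im : nat -> A -> Prop) : Prop :=
  forall i, (1 <= i <= n)%N ->
    [/\ is_ideal S (Ip i), is_ideal S (Im i) &
        forall a, S a -> exists x y, [/\ Ip i x, Im i y & a = x + y]].

Definition I0 (Ip Im : nat -> A -> Prop) (i : nat) : A -> Prop :=
  fun x => Ip i x /\ Im i x.

Definition Icap (S : A -> Prop) (Ip Im : nat -> A -> Prop) (c : nat) : A -> Prop :=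
  fun x => S x /\ forall i, (1 <= i <= c)%N -> I0 Ip Im i x.

Definition Itr (S : A -> Prop) (n : nat) (Ip Im : nat -> A -> Prop) : A -> Prop :=
  Icap S Ip Im n.

Definition loc_left_unital (B : A -> Prop) : Prop :=
  forall s : seq A, (forall a, a \in s -> B a) ->
    exists e, B e /\ forall a, a \in s -> mul e a = a.

Definition loc_right_unital (B : A -> Prop) : Prop :=
  forall s : seq A, (forall a, a \in s -> B a) ->
    exists e, B e /\ forall a, a \in s -> mul a e = a.

Definition loc_biunital (B : A -> Prop) : Prop :=
  loc_left_unital B /\ loc_right_unital B.

Definition good (S : A -> Prop) (n : nat) (Ip Im : nat -> A -> Prop) : Prop :=
  cubical S n Ip Im /\
  forall c, (1 <= c <= n)%N -> loc_biunital (Icap S Ip Im c).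

Inductive comm_span (X Y : A -> Prop) : A -> Prop :=
| cs_0 : comm_span X Y 0
| cs_comm x y : X x -> Y y -> comm_span X Y (mul x y - mul y x)
| cs_add u v : comm_span X Y u -> comm_span X Y v -> comm_span X Y (u + v)
| cs_scale (c : k) u : comm_span X Y u -> comm_span X Y (c *: u).

(* The natural map T/[T,T] -> T/[T,S] (induced by the identity of T) is a
   well-defined bijection; quotients are presented as T modulo the
   congruences x ~ y <-> x - y \in [T,T] (resp. [T,S]).  The map is k-linear
   by construction, so this says it is an isomorphism of k-vector spaces. *)
Definition natural_map_iso (T S : A -> Prop) : Prop :=
  [/\ (forall x y, T x -> T y -> comm_span T T (x - y) -> comm_span T S (x - y)),
      (forall x y, T x -> T y -> comm_span T S (x - y) -> comm_span T T (x - y)) &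
      (forall y, T y -> exists x, T x /\ comm_span T S (x - y))].

End NUAlg.

From HB Require Import structures.
From mathcomp Require Import all_boot all_order all_algebra.
Set Implicit Arguments. Unset Strict Implicit. Unset Printing Implicit Defensive.
Import GRing.Theory.
Local Open Scope ring_scope.

(* Part (1): [I_1^0] is a locally left unital ideal, so every [a] in it
   factors as [a = e a = x a + y a] with [e = x + y], [x] in [I_i^+] and [y]
   in [I_i^-]; hence the restricted ideals still cover [I_1^0], and the
   intersections of the restricted cube are those of the original cube
   shifted by one.  Part (2): if [t e = t] with [e] in [I_tr], then
   [t a - a t = [t, e a] + [e, a t]], a sum of commutators inside [I_tr]. *)

Section NonUnitalAlgebra.
Variables (k : fieldType) (A : lmodType k) (mul : A -> A -> A).

Lemma is_ideal_setI (S I J : A -> Prop) :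
  is_ideal mul S I -> is_ideal mul S J -> is_ideal mul S (fun x => I x /\ J x).
Proof.
move=> [IS [I_0 [ID [IZ IM]]]] [_ [J_0 [JD [JZ JM]]]].
split; first by move=> x [/IS].
split; first by [].
split; first by move=> x y [? ?] [? ?]; split; [exact: ID | exact: JD].
split; first by move=> c x [? ?]; split; [exact: IZ | exact: JZ].
move=> s x Ss [Ix Jx].
by have [? ?] := IM s x Ss Ix; have [? ?] := JM s x Ss Jx.
Qed.

Lemma is_ideal_bigcap (S : A -> Prop) (P : nat -> Prop) (I : nat -> A -> Prop) :
  is_subalg mul S -> (forall i, P i -> is_ideal mul S (I i)) ->
  is_ideal mul S (fun x => S x /\ forall i, P i -> I i x).
Proof.
move=> [S0 [SD [SZ SM]]] idealI.
split; first by move=> x [].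
split; first by split=> // i /idealI [_ []].
split.
  move=> x y [Sx Ix] [Sy Iy]; split=> [|i Pi]; first exact: SD.
  by have [_ [_ [ID _]]] := idealI i Pi; apply: ID; [apply: Ix | apply: Iy].
split.
  move=> c x [Sx Ix]; split=> [|i Pi]; first exact: SZ.
  by have [_ [_ [_ [IZ _]]]] := idealI i Pi; apply: IZ; apply: Ix.
move=> s x Ss [Sx Ix].
have IMsx i : P i -> I i (mul s x) /\ I i (mul x s).
  by move=> Pi; have [_ [_ [_ [_ IM]]]] := idealI i Pi; exact: IM (Ix i Pi).
by split; split=> [|i /IMsx[]//]; exact: SM.
Qed.

Lemma is_ideal_restr (S B I : A -> Prop) :
  is_ideal mul S I -> is_ideal mul S B -> is_ideal mul B (fun x => I x /\ B x).
Proof.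
move=> idealI idealB; have [BS _] := idealB.
have [_ [? [? [? IBM]]]] := is_ideal_setI idealI idealB.
split; first by move=> x [].
by do 3 (split=> //); move=> s x /BS; apply: IBM.
Qed.

Lemma ideal_subalg (S I : A -> Prop) : is_ideal mul S I -> is_subalg mul I.
Proof.
move=> [IS [I_0 [ID [IZ IM]]]]; do 3 (split=> //).
by move=> x y /IS Sx Iy; have [? _] := IM x y Sx Iy.
Qed.

Lemma setA_subalg : is_subalg mul (@setA k A).
Proof. by []. Qed.

Lemma Icap_ideal (S : A -> Prop) n Ip Im c :
  is_subalg mul S -> cubical mul S n Ip Im -> (c <= n)%N ->
  is_ideal mul S (Icap S Ip Im c).
Proof.
move=> subS cubS le_cn; apply: is_ideal_bigcap subS _ => i /andP[i_ge1 i_lec].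
have le_in : (1 <= i <= n)%N by rewrite i_ge1 (leq_trans i_lec le_cn).
have [idealp idealm _] := cubS i le_in.
exact: is_ideal_setI.
Qed.

Lemma loc_biunital_eq (B C : A -> Prop) :
  (forall x, B x <-> C x) -> loc_biunital mul B -> loc_biunital mul C.
Proof.
move=> eqBC [BL BR]; split=> s sC.
- have [e [Be eK]] := BL s (fun a sa => proj2 (eqBC a) (sC a sa)).
  by exists e; split=> //; apply/eqBC.
- have [e [Be eK]] := BR s (fun a sa => proj2 (eqBC a) (sC a sa)).
  by exists e; split=> //; apply/eqBC.
Qed.

Lemma loc_left_unital1 (B : A -> Prop) a :
  loc_left_unital mul B -> B a -> exists e, B e /\ mul e a = a.
Proof.
move=> unitB Ba; have [|e [Be ea]] := unitB [:: a].
  by move=> b; rewrite inE => /eqP ->.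
by exists e; split=> //; apply: ea; rewrite mem_head.
Qed.

Lemma loc_right_unital1 (B : A -> Prop) a :
  loc_right_unital mul B -> B a -> exists e, B e /\ mul a e = a.
Proof.
move=> unitB Ba; have [|e [Be ae]] := unitB [:: a].
  by move=> b; rewrite inE => /eqP ->.
by exists e; split=> //; apply: ae; rewrite mem_head.
Qed.

Hypothesis mulP : is_nualg mul.

Lemma ideal_split_loc_left_unital (S Ip Im B : A -> Prop) :
  is_ideal mul S Ip -> is_ideal mul S Im -> is_ideal mul S B ->
  (forall a, S a -> exists x y, [/\ Ip x, Im y & a = x + y]) ->
  loc_left_unital mul B ->
  forall a, B a -> exists x y, [/\ Ip x /\ B x, Im y /\ B y & a = x + y].
Proof.
move=> [IpS [_ [_ [_ IpM]]]] [ImS [_ [_ [_ ImM]]]] [BS [_ [_ [_ BM]]]] split_S unitB.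
move=> a Ba; have Sa := BS a Ba.
have [e [Be ea]] := loc_left_unital1 unitB Ba.
have [x [y [Ipx Imy e_xy]]] := split_S e (BS e Be).
exists (mul x a), (mul y a); split.
- by split; [have [_ ?] := IpM a x Sa Ipx | have [? _] := BM x a (IpS x Ipx) Ba].
- by split; [have [_ ?] := ImM a y Sa Imy | have [? _] := BM y a (ImS y Imy) Ba].
have [_ [mulDl _]] := mulP.
by rewrite -{1}ea e_xy -[x]scale1r mulDl !scale1r.
Qed.

Lemma cubical_restr (S B : A -> Prop) n Ip Im :
  is_ideal mul S B -> loc_left_unital mul B -> cubical mul S n.+1 Ip Im ->
  cubical mul B n (fun j x => Ip j.+1 x /\ B x) (fun j x => Im j.+1 x /\ B x).
Proof.
move=> idealB unitB cubS j /andP[_ le_jn].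
have [idealp idealm split_S] := cubS j.+1 le_jn.
split; [exact: is_ideal_restr idealp idealB | exact: is_ideal_restr idealm idealB |].
exact: ideal_split_loc_left_unital idealp idealm idealB split_S unitB.
Qed.

Lemma comm_span_mono (X Y X' Y' : A -> Prop) :
  (forall x, X x -> X' x) -> (forall y, Y y -> Y' y) ->
  forall u, comm_span mul X Y u -> comm_span mul X' Y' u.
Proof.
move=> XX' YY' u; elim=> [|x y /XX' ? /YY' ?|u1 u2 _ ? _ ?|c u1 _ ?].
- exact: cs_0.
- exact: cs_comm.
- exact: cs_add.
- exact: cs_scale.
Qed.

Lemma comm_ideal_loc_right_unital (S T : A -> Prop) t a :
  is_ideal mul S T -> loc_right_unital mul T -> T t -> S a ->
  comm_span mul T T (mul t a - mul a t).
Proof.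
move=> [_ [_ [_ [_ TM]]]] unitT Tt Sa; have [mulA _] := mulP.
have [e [Te te]] := loc_right_unital1 unitT Tt.
have -> : mul t a - mul a t =
    (mul t (mul e a) - mul (mul e a) t) + (mul e (mul a t) - mul (mul a t) e).
  by rewrite mulA te -mulA -mulA te addrA subrK.
have [_ Tea] := TM a e Sa Te; have [Tat _] := TM a t Sa Tt.
by apply: cs_add; apply: cs_comm.
Qed.

Lemma natural_map_iso_loc_right_unital (S T : A -> Prop) :
  is_ideal mul S T -> loc_right_unital mul T -> natural_map_iso mul T S.
Proof.
move=> idealT unitT; have [TS _] := idealT.
split=> [x y _ _|x y _ _|y Ty]; first by apply: comm_span_mono.
- elim=> [|t a Tt Sa|u1 u2 _ ? _ ?|c u1 _ ?].
  + exact: cs_0.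
  + exact: comm_ideal_loc_right_unital idealT unitT Tt Sa.
  + exact: cs_add.
  + exact: cs_scale.
- by exists y; split=> //; rewrite subrr; apply: cs_0.
Qed.

End NonUnitalAlgebra.

Lemma Icap0 (k : fieldType) (A : lmodType k) (S : A -> Prop) Ip Im x :
  Icap S Ip Im 0 x <-> S x.
Proof. by split=> [[]//|Sx]; split=> // i /andP[le1i /(leq_trans le1i)]. Qed.

Lemma Icap_shift (k : fieldType) (A : lmodType k) (Ip Im : nat -> A -> Prop) c x :
  Icap (I0 Ip Im 1) (fun j x => Ip j.+1 x /\ I0 Ip Im 1 x)
       (fun j x => Im j.+1 x /\ I0 Ip Im 1 x) c x <->
  Icap (@setA k A) Ip Im c.+1 x.
Proof.
split=> [[A'x Ix]|[_ Ix]].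
- split=> // -[|[|j]] // /andP[_ le_jc].
  by have [[? _] [? _]] := Ix j.+1 le_jc.
- split=> [|i /andP[le1i le_ic]]; first exact: Ix.
  have [? ?] : I0 Ip Im i.+1 x by apply: Ix; rewrite /= ltnS le_ic.
  by split; split=> //; apply: Ix.
Qed.

Theorem mainTheorem9 (k : fieldType) (A : lmodType k) (mul : A -> A -> A)
    (n : nat) (Ip Im : nat -> A -> Prop) :
  is_nualg mul -> (1 <= n)%N ->
  good mul (@setA k A) n Ip Im ->
  let A' := I0 Ip Im 1 in
  let Jp := fun j x => Ip j.+1 x /\ A' x in
  let Jm := fun j x => Im j.+1 x /\ A' x in
  ([/\ is_subalg mul A',
       good mul A' n.-1 Jp Jm &
       forall x, Itr A' n.-1 Jp Jm x <-> Itr (@setA k A) n Ip Im x])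
  /\ natural_map_iso mul (Itr (@setA k A) n Ip Im) (@setA k A).
Proof.
case: n => // m mulP _ [cubA goodA] A' Jp Jm.
have idealA' : is_ideal mul (@setA k A) A'.
  by have [idealp idealm _] := cubA 1%N isT; exact: is_ideal_setI idealp idealm.
have [unitA' _] : loc_biunital mul A'.
  apply: loc_biunital_eq (goodA 1%N isT) => x.
  by split=> [/Icap_shift/Icap0 | /Icap0/Icap_shift].
split; first split.
- exact: ideal_subalg idealA'.
- split=> [|c /andP[_ le_cm]]; first exact: cubical_restr idealA' unitA' cubA.
  apply: loc_biunital_eq (goodA c.+1 le_cm) => x.
  by split=> /Icap_shift.
- exact: Icap_shift.
have [_ unitTr] := goodA m.+1 (leqnn _).
apply: natural_map_iso_loc_right_unital unitTr => //.
exact: Icap_ideal (@setA_subalg k A mul) cubA (leqnn _).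
Qed.
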